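(* Let $G$ be a finite directed graph and $R\subseteq V(G)$. Then $\mathrm{DT}_R(G)$ is shellable.
   Context: A directed forest in $G$ is a set of edges of $G$ which, viewed as a graph on $V(G)$, is acyclic and has at most one edge directed to each vertex; its roots are the vertices of $V(G)$ with no edge of the forest directed to them. $\mathrm{DT}(G)$ is the simplicial complex with vertex set $E(G)$ whose simplices are the directed forests. $\mathrm{DT}_R(G)\subseteq \mathrm{DT}(G)$ is the subcomplex generated by the faces of $\mathrm{DT}(G)$ that are edge sets of directed forests with root set exactly $R$. A simplicial complex $\Delta$ is shellable if its maximal faces can be ordered $F_1,\dots,F_n$ such that for all $1\le i<k\le n$ there exist $1\le j<k$ and $e\in F_k$ with $F_i\cap F_k\subseteq F_j\cap F_k=F_k\setminus\{e\}$. *)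

From mathcomp Require Import all_boot.
Set Implicit Arguments. Unset Strict Implicit. Unset Printing Implicit Defensive.

(* A finite directed graph G is a finite vertex type V together with an
   edge set E : {set V * V}; the edge (u, v) is directed from u to v. *)

Section DirTree.
Variable V : finType.

Definition joins (e : V * V) (x y : V) : bool := (e == (x, y)) || (e == (y, x)).

(* F, viewed as an (undirected) graph on V, contains a cycle: distinct
   vertices v_0,...,v_{k-1} (k >= 1) and distinct edges e_0,...,e_{k-1} of F
   with e_i joining v_i and v_{i+1 mod k}.  (k = 1: a loop; k = 2: two
   antiparallel edges.) *)
Definition has_cycle (F : {set V * V}) : Prop :=
  exists (vs : seq V) (es : seq (V * V)),
    [/\ 0 < size vs, size es = size vs, uniq vs & uniq es] /\
    all (fun e => e \in F) es /\
        forall (x0 : V) (e0 : V * V) (i : nat), i < size vs ->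
          joins (nth e0 es i) (nth x0 vs i) (nth x0 vs ((i.+1) %% size vs)).

Definition is_dforest (E F : {set V * V}) : Prop :=
  [/\ F \subset E,
      forall v : V, #|[set e in F | e.2 == v]| <= 1 &
      ~ has_cycle F].

Definition roots (F : {set V * V}) : {set V} :=
  [set v : V | [forall e in F, e.2 != v]].

Definition DT_R (E : {set V * V}) (R : {set V}) : {set V * V} -> Prop :=
  fun S => exists F : {set V * V}, [/\ is_dforest E F, roots F = R & S \subset F].
End DirTree.

(* Abstract simplicial complexes on a finite ground type, given by their
   faces as a predicate. *)
Section Shell.
Variable T : finType.

Definition is_facet (D : {set T} -> Prop) (F : {set T}) : Prop :=
  D F /\ forall F' : {set T}, D F' -> F \subset F' -> F' = F.

(* shellable: the maximal faces can be listed F_1,...,F_n (each exactly once)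
   so that for all i < k there are j < k and e \in F_k with
   F_i :&: F_k \subset F_j :&: F_k = F_k :\ e. (0-based indices here.) *)
Definition shellable (D : {set T} -> Prop) : Prop :=
  exists s : seq {set T},
    [/\ uniq s,
        forall F : {set T}, F \in s <-> is_facet D F &
        forall i k : nat, i < k -> k < size s ->
          exists j : nat, j < k /\ exists e : T,
            [/\ e \in nth set0 s k,
                nth set0 s i :&: nth set0 s k \subset nth set0 s j :&: nth set0 s k &
                nth set0 s j :&: nth set0 s k = nth set0 s k :\ e]].
End Shell.

(* The facets of DT_R(G) are the directed forests of G with root set exactly R:
   every vertex outside R gets one parent edge, and following parents never
   cycles.  List them by increasing (total depth, total rank of the parents),
   compared lexicographically, ranks referring to a fixed enumeration of V.
   If F_i comes before F_k, regraft one vertex v of F_k onto its parent in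
   F_i: when some vertex is strictly deeper in F_k than in F_i, take such a v
   of minimal F_i-depth, and the total depth drops; otherwise the depths agree
   and a v whose F_i-parent has smaller rank lowers the second component.  The
   regrafted forest F_j = F_k - e + e' precedes F_k and contains F_i :&: F_k,
   which is the shelling condition. *)

From mathcomp Require Import all_boot order.
From Stdlib Require Import ClassicalEpsilon.
Set Implicit Arguments. Unset Strict Implicit. Unset Printing Implicit Defensive.
Import Order.TTheory.

Section ShellingByExchange.
Variables (T : finType) (D : {set T} -> Prop).
Variables (disp : Order.disp_t) (K : orderType disp) (key : {set T} -> K).

Hypothesis exchange : forall A B : {set T},
  is_facet D A -> is_facet D B -> A != B -> (key A <= key B)%O ->
  exists C e, [/\ is_facet D C, (key C < key B)%O, e \in B,
                  A :&: B \subset C :&: B & C :&: B = B :\ e].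

Lemma shellable_by_exchange : shellable D.
Proof.
pose leK A B := (key A <= key B)%O.
have leK_trans : transitive leK by move=> ? ? ?; exact: le_trans.
pose s := sort leK (enum [pred F | excluded_middle_informative (is_facet D F)]).
have mem_s F : F \in s <-> is_facet D F.
  by rewrite mem_sort mem_enum inE; split=> /sumboolP.
have uniq_s : uniq s by rewrite sort_uniq enum_uniq.
have sorted_s : sorted leK s by apply: sort_sorted => A B; exact: le_total.
(* keep s opaque, lest conversion start enumerating {set T} *)
clearbody s.
have leK_nth i k : i <= k -> k < size s -> leK (nth set0 s i) (nth set0 s k).
  move=> le_ik lt_ks.
  apply: (sorted_leq_nth leK_trans (fun A => lexx (key A))) => //.
  by rewrite inE (leq_ltn_trans le_ik lt_ks).
exists s; split=> [//||i k lt_ik lt_ks]; first exact: mem_s.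
have lt_is : i < size s := ltn_trans lt_ik lt_ks.
have neq_ik : nth set0 s i != nth set0 s k by rewrite nth_uniq // ltn_eqF.
have [C [e [/mem_s s_C lt_Ck e_k sub_ikC CkE]]] :=
  exchange ((mem_s _).1 (mem_nth _ lt_is)) ((mem_s _).1 (mem_nth _ lt_ks))
           neq_ik (leK_nth i k (ltnW lt_ik) lt_ks).
exists (index C s); split; last by exists e; rewrite nth_index.
rewrite ltnNge; apply/negP => le_kC.
have := leK_nth k (index C s) le_kC; rewrite index_mem nth_index // /leK.
by rewrite leNgt lt_Ck => /(_ s_C).
Qed.

End ShellingByExchange.

Lemma ltn_sum (I : finType) (a b : I -> nat) i :
  (forall j, a j <= b j) -> a i < b i -> \sum_j a j < \sum_j b j.
Proof.
move=> le_ab lt_i; rewrite [X in X < _](bigD1 i) // [X in _ < X](bigD1 i) //=.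
by rewrite -addSn leq_add // leq_sum.
Qed.

Lemma eq_of_leq_sum (I : finType) (a b : I -> nat) :
  (forall i, a i <= b i) -> \sum_i b i <= \sum_i a i -> a =1 b.
Proof.
move=> le_ab le_sum i; apply/eqP; rewrite eqn_leq le_ab leqNgt.
by apply: contraL le_sum => /(ltn_sum le_ab); rewrite -ltnNge.
Qed.

Lemma iter_modn (A : Type) (f : A -> A) (x : A) (n k : nat) :
  iter n f x = x -> iter (k %% n) f x = iter k f x.
Proof.
move=> periodic; rewrite {2}(divn_eq k n) addnC iterD iterM.
by rewrite [iter _ (iter n f) x]iter_fix.
Qed.

Section ParentMap.
Variable V : finType.
Implicit Types (T : {set V * V}) (e : V * V) (u v x : V).

Definition in_edges T v := [set e in T | e.2 == v].

Definition indeg_le1 T := forall v, #|in_edges T v| <= 1.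

Definition parent T v := if [pick e in in_edges T v] is Some e then e.1 else v.

Lemma in_rootsE T v : (v \in roots T) = (in_edges T v == set0).
Proof.
rewrite inE; apply/forall_inP/eqP => [noin|noin e eT].
  by apply/setP=> e; rewrite !inE; apply/andP=> -[/noin/negP].
by apply/eqP=> ev; have := in_set0 e; rewrite -noin !inE eT ev eqxx.
Qed.

Lemma head_notin_roots T e : e \in T -> e.2 \notin roots T.
Proof. by move=> eT; rewrite in_rootsE; apply/set0Pn; exists e; rewrite !inE eT /=. Qed.

Lemma parent_edge T v : v \notin roots T -> (parent T v, v) \in T.
Proof.
rewrite in_rootsE /parent => /set0Pn[e0 e0_in].
case: pickP => [e|/(_ e0)]; last by rewrite e0_in.
by rewrite !inE => /andP[eT /eqP <-]; case: e eT.
Qed.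

Lemma parent_root T v : v \in roots T -> parent T v = v.
Proof. by rewrite in_rootsE /parent => /eqP->; case: pickP => // e; rewrite inE. Qed.

Section InDegreeAtMostOne.
Variable T : {set V * V}.
Hypothesis T_indeg : indeg_le1 T.

Lemma edge_parent e : e \in T -> e = (parent T e.2, e.2).
Proof.
move=> eT; apply: (card_le1_eqP (T_indeg e.2)); rewrite !inE ?eT ?eqxx //=.
by rewrite parent_edge // head_notin_roots.
Qed.

Lemma parentE u v : (u, v) \in T -> parent T v = u.
Proof. by move/edge_parent=> []. Qed.

End InDegreeAtMostOne.

Lemma acyclic_of_potential T (h : V -> nat) :
  indeg_le1 T -> {in T, forall e, h e.1 < h e.2} -> ~ has_cycle T.
Proof.
move=> T_indeg h_incr [vs [es [[n_gt0 size_es uniq_vs uniq_es] [es_T es_join]]]].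
have [x0 _] : exists x0 : V, x0 \in vs.
  by case: (vs) n_gt0 => // x ? _; exists x; rewrite mem_head.
pose e0 := (x0, x0); pose n := size vs.
pose a (i : 'I_n) := nth x0 vs i; pose ed (i : 'I_n) := nth e0 es i.
have ed_T i : ed i \in T by apply: (allP es_T); rewrite mem_nth // size_es.
have ed_join i : joins (ed i) (a i) (a (ordS i)) := es_join x0 e0 i (ltn_ord i).
have joinsC e y z : joins e y z = joins e z y by rewrite /joins orbC.
have orient e y z : e \in T -> joins e y z -> h z <= h y -> e = (z, y).
  move=> eT /orP[]/eqP ee le_zy //; have := h_incr _ eT.
  by rewrite ee /= ltnNge le_zy.
(* both cycle edges at a vertex of maximal potential point into it *)
have [i _ max_i] := @arg_maxnP _ (Ordinal n_gt0) predT (fun i => h (a i)) isT.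
pose p := ord_pred i; have ordS_p : ordS p = i := ord_predK i.
have ed_i : ed i = (a (ordS i), a i).
  exact: orient (ed_T i) (ed_join i) (max_i _ isT).
have ed_p : ed p = (a p, a i).
  by apply: orient (ed_T p) _ (max_i _ isT); rewrite joinsC -ordS_p.
have ed_pi : ed p = ed i.
  by apply: (card_le1_eqP (T_indeg (a i))); rewrite !inE ?ed_T ?ed_p ?ed_i /=.
have p_i : p = i.
  apply/val_inj/eqP; rewrite -(nth_uniq e0 _ _ uniq_es) ?size_es ?ltn_ord //.
  exact/eqP.
by have := h_incr _ (ed_T i); rewrite ed_i /= -{1}p_i ordS_p ltnn.
Qed.

Lemma nth_orbit_succ (f : V -> V) x x0 i :
  iter (order f x) f x = x -> i < order f x ->
  nth x0 (orbit f x) (i.+1 %% order f x) = f (nth x0 (orbit f x) i).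
Proof.
move=> periodic lt_i.
have lt_Si : i.+1 %% order f x < order f x by rewrite ltn_pmod ?order_gt0.
rewrite /orbit !(set_nth_default x) ?size_traject // !nth_traject //.
by rewrite iter_modn.
Qed.

Lemma has_cycle_orbit T (f : V -> V) x :
  iter (order f x) f x = x -> {in orbit f x, forall y, (f y, y) \in T} -> has_cycle T.
Proof.
move=> periodic f_T; exists (orbit f x), [seq (f y, y) | y <- orbit f x].
split; first split.
- by rewrite size_orbit order_gt0.
- by rewrite size_map.
- exact: orbit_uniq.
- by rewrite map_inj_uniq ?orbit_uniq // => y z [].
split; first by apply/allP=> _ /mapP[y y_orb ->]; exact: f_T.
move=> x0 e0 i; rewrite size_orbit => lt_i.
by rewrite (nth_map x0) ?size_orbit // nth_orbit_succ // /joins eqxx orbT.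
Qed.

Lemma iter_parent_roots T v :
  ~ has_cycle T -> exists2 k, k <= #|V| & iter k (parent T) v \in roots T.
Proof.
move=> acyclic; set f := parent T.
have [/existsP[k k_r]|none] := boolP [exists k : 'I_#|V|.+1, iter k f v \in roots T].
  by exists k; first rewrite -ltnS ltn_ord.
have notin_roots k : k <= #|V| -> iter k f v \notin roots T.
  rewrite -ltnS => lt_k; apply: contra none => k_r.
  by apply/existsP; exists (Ordinal lt_k).
have : ~~ uniq (traject f v #|V|.+1).
  apply/negP => /card_uniqP; rewrite size_traject => card_traject.
  by have := max_card (mem (traject f v #|V|.+1)); rewrite card_traject ltnn.
rewrite looping_uniq negbK => /trajectP[i lt_i eq_i].
pose x := iter i f v.
have periodic : iter (order f x) f x = x.
  apply: (orbitPcycle 3 4).1; exists (#|V| - i).-1.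
  by rewrite prednK ?subn_gt0 // /x -iterD (subnK (ltnW lt_i)).
(* a root is fixed by parent, so the cycle through x contains no root *)
exfalso; apply: acyclic; apply: (has_cycle_orbit periodic) => _ /trajectP[t lt_t ->].
apply: parent_edge; apply: contra (notin_roots i (ltnW lt_i)) => t_r.
have := iter_fix (order f x - t) (parent_root t_r).
rewrite -iterD (subnK (ltnW lt_t)) periodic => x_eq.
by rewrite -/x x_eq.
Qed.

(* The fuel #|V|.+1 suffices once T has no cycle (iter_parent_roots); for a
   cyclic T the value is junk. *)
Definition depth T v := find (mem (roots T)) (traject (parent T) v #|V|.+1).

Lemma depth_root T v : v \in roots T -> depth T v = 0.
Proof. by rewrite /depth trajectS /= => ->. Qed.

Lemma depth_parent T v : ~ has_cycle T -> v \notin roots T ->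
  depth T v = (depth T (parent T v)).+1.
Proof.
move=> acyclic v_nr.
have [[|k] le_k k_r] := iter_parent_roots v acyclic; first by case/negP: v_nr.
have hit : has (mem (roots T)) (traject (parent T) (parent T v) #|V|).
  apply/hasP; exists (iter k (parent T) (parent T v)); last by rewrite -iterSr.
  by apply/trajectP; exists k.
rewrite /depth trajectS trajectSr -cat1s -cats1 !find_cat hit /= (negbTE v_nr).
exact: add1n.
Qed.

Lemma depth_le_potential T (d : V -> nat) : ~ has_cycle T ->
  (forall x, x \notin roots T -> d (parent T x) < d x) -> forall x, depth T x <= d x.
Proof.
move=> acyclic d_decr x; have [n] := ubnP (d x); elim: n x => // n IHn x.
have [x_r|x_nr] := boolP (x \in roots T); first by rewrite depth_root.
rewrite ltnS depth_parent // => le_dx.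
exact: leq_ltn_trans (IHn _ (leq_trans (d_decr x x_nr) le_dx)) (d_decr x x_nr).
Qed.

Definition regraft T u v := T :\ (parent T v, v) :|: [set (u, v)].

Section Regraft.
Variables (T : {set V * V}) (u v : V).
Hypotheses (T_indeg : indeg_le1 T) (v_nr : v \notin roots T).

Lemma mem_regraft e :
  (e \in regraft T u v) = (e == (u, v)) || (e \in T) && (e.2 != v).
Proof.
rewrite !inE orbC; congr (_ || _); have [eT|] := boolP (e \in T); last by rewrite andbF.
rewrite andbT; have [e2v|ne2v] := eqVneq e.2 v.
  by rewrite [e](edge_parent T_indeg eT) /= e2v eqxx.
by apply: contraNneq ne2v => ->.
Qed.

Lemma in_edges_regraft x :
  in_edges (regraft T u v) x = if x == v then [set (u, v)] else in_edges T x.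
Proof.
apply/setP=> e; rewrite /in_edges in_set mem_regraft.
have [->|nxv] := eqVneq x v; rewrite !inE.
  have [->|neuv] := eqVneq e (u, v); first by rewrite !eqxx.
  by rewrite /= -andbA andNb andbF.
have [e2x|] := eqVneq e.2 x; last by rewrite !andbF.
have -> : (e == (u, v)) = false by apply: contraNF nxv => /eqP euv; rewrite -e2x euv.
by rewrite e2x nxv /= !andbT.
Qed.

Lemma indeg_le1_regraft : indeg_le1 (regraft T u v).
Proof. by move=> x; rewrite in_edges_regraft; case: ifP => _; rewrite ?cards1. Qed.

Lemma roots_regraft : roots (regraft T u v) = roots T.
Proof.
apply/setP=> x; rewrite !in_rootsE in_edges_regraft; have [->|//] := eqVneq x v.
by rewrite -!cards_eq0 cards1 cards_eq0 -in_rootsE (negbTE v_nr).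
Qed.

Lemma parent_regraft x : parent (regraft T u v) x = if x == v then u else parent T x.
Proof.
have [->|nxv] := eqVneq x v.
  by apply: (parentE indeg_le1_regraft); rewrite mem_regraft eqxx.
have [x_r|x_nr] := boolP (x \in roots T).
  by rewrite !parent_root ?roots_regraft.
by apply: (parentE indeg_le1_regraft); rewrite mem_regraft parent_edge //= nxv orbT.
Qed.

Lemma regraft_subset (E : {set V * V}) :
  T \subset E -> (u, v) \in E -> regraft T u v \subset E.
Proof.
move=> TE uvE; rewrite subUset sub1set uvE andbT.
exact: subset_trans (subsetDl T [set (parent T v, v)]) TE.
Qed.

Lemma regraft_setI : u != parent T v -> regraft T u v :&: T = T :\ (parent T v, v).
Proof.
move=> neq_u; have uvNT : (u, v) \notin T by apply: contra neq_u => /(parentE T_indeg) ->.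
apply/setP=> e; rewrite !inE; have [->|_] := eqVneq e (u, v).
  by rewrite (negbTE uvNT) !andbF.
by rewrite orbF -andbA andbb.
Qed.

Lemma regraft_setI_subset (A : {set V * V}) :
  (parent T v, v) \notin A -> A :&: T \subset regraft T u v :&: T.
Proof.
move=> pNA; apply/subsetP=> e; rewrite !inE => /andP[eA ->].
by rewrite !andbT; apply/orP; left; apply: contraNneq pNA => <-.
Qed.

Hypotheses (T_acyclic : ~ has_cycle T) (lt_uv : depth T u < depth T v).

Lemma depth_parent_regraft x :
  x \notin roots (regraft T u v) -> depth T (parent (regraft T u v) x) < depth T x.
Proof.
rewrite roots_regraft parent_regraft => x_nr; case: eqVneq => [->|_] //.
by rewrite (depth_parent T_acyclic x_nr).
Qed.

Lemma regraft_acyclic : ~ has_cycle (regraft T u v).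
Proof.
apply: (acyclic_of_potential (h := depth T) indeg_le1_regraft) => e eT'.
rewrite {1}(edge_parent indeg_le1_regraft eT').
exact: depth_parent_regraft (head_notin_roots eT').
Qed.

Lemma depth_regraft x : depth (regraft T u v) x <= depth T x.
Proof. exact: depth_le_potential regraft_acyclic depth_parent_regraft x. Qed.

Lemma depth_regraft_at : depth (regraft T u v) v <= (depth T u).+1.
Proof.
rewrite (depth_parent regraft_acyclic) ?roots_regraft // parent_regraft eqxx.
exact: depth_regraft.
Qed.

End Regraft.

End ParentMap.

Section RootedForests.
Variables (V : finType) (E : {set V * V}) (R : {set V}).
Implicit Types (A B T : {set V * V}) (u v : V).

Definition rooted_forest T := is_dforest E T /\ roots T = R.

Lemma rooted_forest_subset_eq A B :
  rooted_forest A -> rooted_forest B -> A \subset B -> A = B.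
Proof.
move=> [_ A_roots] [[_ B_indeg _] B_roots] AB; apply/eqP; rewrite eqEsubset AB.
apply/subsetP=> e eB; have e2_nr : e.2 \notin roots A.
  by rewrite A_roots -B_roots head_notin_roots.
have pA : (parent A e.2, e.2) \in A := parent_edge e2_nr.
by rewrite (edge_parent B_indeg eB) (parentE B_indeg (subsetP AB _ pA)).
Qed.

Lemma is_facet_DT_R F : is_facet (DT_R E R) F <-> rooted_forest F.
Proof.
split=> [[[G [G_forest G_roots FG]] F_max]|F_rooted].
  have DG : DT_R E R G by exists G; split.
  by rewrite -(F_max G DG FG).
split=> [|F' [G [G_forest G_roots F'G]] FF']; first by exists F; case: F_rooted.
have FG := rooted_forest_subset_eq F_rooted (conj G_forest G_roots) (subset_trans FF' F'G).
by apply/eqP; rewrite eqEsubset FF' andbT FG.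
Qed.

Lemma rooted_forest_eq A B :
  rooted_forest A -> rooted_forest B -> parent A =1 parent B -> A = B.
Proof.
move=> A_rooted B_rooted eq_parent; apply: rooted_forest_subset_eq => //.
case: A_rooted B_rooted => [[_ A_indeg _] A_roots] [_ B_roots].
apply/subsetP=> e eA; rewrite (edge_parent A_indeg eA) eq_parent.
by apply: parent_edge; rewrite B_roots -A_roots head_notin_roots.
Qed.

Lemma rooted_forest_regraft B u v : rooted_forest B -> v \notin R -> (u, v) \in E ->
  depth B u < depth B v -> rooted_forest (regraft B u v).
Proof.
move=> [[BE B_indeg B_acyclic] B_roots] v_nr uvE lt_uv; rewrite -B_roots in v_nr.
split; last by rewrite roots_regraft.
split; [exact: regraft_subset | exact: indeg_le1_regraft | exact: regraft_acyclic].
Qed.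

End RootedForests.

Definition depth_sum (V : finType) (T : {set V * V}) := \sum_x depth T x.
Definition parent_rank_sum (V : finType) (T : {set V * V}) := \sum_x enum_rank (parent T x).
Definition forest_key (V : finType) (T : {set V * V}) : nat *l nat :=
  (depth_sum T, parent_rank_sum T).

Lemma forest_key_lt (V : finType) (C T : {set V * V}) : depth_sum C <= depth_sum T ->
  (depth_sum C < depth_sum T) || (parent_rank_sum C < parent_rank_sum T) ->
  (forest_key C < forest_key T)%O.
Proof.
rewrite ltxi_pair leEnat ltEnat => -> /orP[lt_depth|lt_rank].
  by rewrite leqNgt lt_depth.
by apply/implyP.
Qed.

Section Exchange.
Variables (V : finType) (E : {set V * V}) (R : {set V}) (A B : {set V * V}).
Hypotheses (A_rooted : rooted_forest E R A) (B_rooted : rooted_forest E R B).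

Lemma exchange_deeper w : depth A w < depth B w ->
  exists v, [/\ v \notin R, parent A v != parent B v,
    rooted_forest E R (regraft B (parent A v) v) &
    (forest_key (regraft B (parent A v) v) < forest_key B)%O].
Proof.
have [[AE _ A_acyclic] A_roots] := A_rooted.
have [[_ B_indeg B_acyclic] B_roots] := B_rooted.
move=> lt_w.
have [v lt_v min_v] := arg_minnP (depth A) (lt_w : (fun x => depth A x < depth B x) w).
have v_nr : v \notin R.
  by apply: contraTN lt_v => v_r; rewrite !depth_root ?A_roots ?B_roots.
have [v_nrA v_nrB] : v \notin roots A /\ v \notin roots B by rewrite A_roots B_roots.
set u := parent A v.
have depthA_v : depth A v = (depth A u).+1 := depth_parent A_acyclic v_nrA.
have le_u : depth B u <= depth A u.
  by rewrite leqNgt; apply/negP => /min_v; rewrite depthA_v ltnn.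
have lt_Su : (depth B u).+1 < depth B v by rewrite (leq_ltn_trans _ lt_v) // depthA_v ltnS.
have lt_u := ltnW lt_Su.
have uvE : (u, v) \in E := subsetP AE _ (parent_edge v_nrA).
exists v; rewrite -/u; split=> //.
- by apply: contraTneq lt_Su => ->; rewrite -(depth_parent B_acyclic v_nrB) ltnn.
- exact: rooted_forest_regraft.
have depth_le := depth_regraft B_indeg v_nrB B_acyclic lt_u.
apply: forest_key_lt; first exact: leq_sum (fun x _ => depth_le x).
apply/orP; left; apply: (ltn_sum depth_le (i := v)).
exact: leq_ltn_trans (depth_regraft_at B_indeg v_nrB B_acyclic lt_u) lt_Su.
Qed.

Lemma exchange_same_depths : depth A =1 depth B -> A != B ->
  parent_rank_sum A <= parent_rank_sum B ->
  exists v, [/\ v \notin R, parent A v != parent B v,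
    rooted_forest E R (regraft B (parent A v) v) &
    (forest_key (regraft B (parent A v) v) < forest_key B)%O].
Proof.
have [[AE _ A_acyclic] A_roots] := A_rooted.
have [[_ B_indeg B_acyclic] B_roots] := B_rooted.
move=> eq_depth neq_AB le_rank; pose rk T (x : V) := nat_of_ord (enum_rank (parent T x)).
have [v lt_v|ge_rank] := pickP (fun x => rk A x < rk B x); last first.
  case/negP: neq_AB; apply/eqP; apply: rooted_forest_eq A_rooted B_rooted _ => x.
  apply/enum_rank_inj/val_inj/esym; apply: (eq_of_leq_sum (a := rk B)) le_rank x => y.
  by rewrite leqNgt ge_rank.
have v_nr : v \notin R.
  by apply: contraTN lt_v => v_r; rewrite /rk !parent_root ?A_roots ?B_roots // ltnn.
have [v_nrA v_nrB] : v \notin roots A /\ v \notin roots B by rewrite A_roots B_roots.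
set u := parent A v.
have lt_u : depth B u < depth B v by rewrite -!eq_depth (depth_parent A_acyclic v_nrA).
have uvE : (u, v) \in E := subsetP AE _ (parent_edge v_nrA).
exists v; rewrite -/u; split=> //.
- by apply: contraTneq lt_v; rewrite /rk -/u => ->; rewrite ltnn.
- exact: rooted_forest_regraft.
have depth_le := depth_regraft B_indeg v_nrB B_acyclic lt_u.
apply: forest_key_lt; first exact: leq_sum (fun x _ => depth_le x).
apply/orP; right; apply: (ltn_sum (a := rk (regraft B u v)) (i := v)).
  move=> x; rewrite /rk (parent_regraft _ B_indeg v_nrB).
  by have [->|_] := eqVneq x v; [exact: ltnW | exact: leqnn].
by rewrite /rk (parent_regraft _ B_indeg v_nrB) eqxx.
Qed.

Lemma rooted_forest_exchange : A != B -> (forest_key A <= forest_key B)%O ->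
  exists v, [/\ v \notin R, parent A v != parent B v,
    rooted_forest E R (regraft B (parent A v) v) &
    (forest_key (regraft B (parent A v) v) < forest_key B)%O].
Proof.
move=> neq_AB; rewrite lexi_pair !leEnat => /andP[le_depth le_rank].
have [w lt_w|ge_depth] := pickP (fun x => depth A x < depth B x).
  exact: exchange_deeper lt_w.
have eq_depth : depth A =1 depth B.
  apply: fsym; apply: eq_of_leq_sum le_depth => x; by rewrite leqNgt ge_depth.
have eq_sum : depth_sum A = depth_sum B by apply: eq_bigr => x _; exact: eq_depth.
by apply: exchange_same_depths; rewrite // -eq_sum leqnn in le_rank.
Qed.

End Exchange.

Theorem theorem2p9 (V : finType) (E : {set V * V}) (R : {set V}) :
  shellable (DT_R E R).
Proof.
apply: (shellable_by_exchange (key := @forest_key V)) => A B.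
move=> /is_facet_DT_R A_rooted /is_facet_DT_R B_rooted neq_AB le_AB.
have [v [v_nr neq_parent C_rooted lt_CB]] :=
  rooted_forest_exchange A_rooted B_rooted neq_AB le_AB.
have [[_ A_indeg _] _] := A_rooted; have [[_ B_indeg _] B_roots] := B_rooted.
have v_nrB : v \notin roots B by rewrite B_roots.
exists (regraft B (parent A v) v), (parent B v, v); split.
- exact/is_facet_DT_R.
- exact: lt_CB.
- exact: parent_edge.
- by apply: regraft_setI_subset; apply: contra neq_parent => /(parentE A_indeg) ->.
- exact: regraft_setI.
Qed.
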